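(* Let $d\ge1$, let $a_{-d},\dots,a_d\in\mathbb{C}$ with $a_{-k}=\overline{a_k}$ and $a_d\ne0$, let $b=(b(n))_{n\in\mathbb{Z}}$ be a bounded real sequence, and let $L$ be the operator on $\ell^2(\mathbb{Z})$ given by $(Lu)(n)=\sum_{k=-d}^da_ku(n+k)+b(n)u(n)$. If $u,v\in\ell^2(\mathbb{Z})$ satisfy $Lu=Eu$ and $Lv=Ev$ for the same eigenvalue $E$, then the vectors $U=\begin{pmatrix}\vec u(1)\\\vec u(0)\end{pmatrix}$ and $V=\begin{pmatrix}\vec v(1)\\\vec v(0)\end{pmatrix}$ in $\mathbb{C}^{2d}$ are symplectically orthogonal with respect to $S$, i.e. $U^*SV=0$.
   Context: For a sequence $u$, $\vec u(n)=(u(nd+d-1),\dots,u(nd+1),u(nd))^T\in\mathbb{C}^d$. $C$ is the $d\times d$ upper triangular matrix with first row $(a_d,a_{d-1},\dots,a_1)$, i.e. $C_{ij}=a_{d-j+i}$ for $j\ge i$ and $0$ for $j<i$, and $S=\begin{pmatrix}0&-C^*\\C&0\end{pmatrix}$. *)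

From HB Require Import structures.
From mathcomp Require Import all_boot all_order all_algebra.
From mathcomp Require Import reals.
From mathcomp Require Import complex.
Set Implicit Arguments. Unset Strict Implicit. Unset Printing Implicit Defensive.
Import Order.TTheory GRing.Theory Num.Theory.
Local Open Scope ring_scope.

Section Defs.
Variable R : realType.
Local Notation C := R[i].

Definition in_l2 (u : int -> C) : Prop :=
  exists M : R, forall N : nat,
    \sum_(i < (N + N).+1) (@complex.Re R (u (i%:Z - N%:Z)) ^+ 2 + @complex.Im R (u (i%:Z - N%:Z)) ^+ 2) <= M.

Definition bounded_seq (b : int -> R) : Prop :=
  exists B : R, forall n, `|b n| <= B.

Definition Lop (d : nat) (a : int -> C) (b : int -> R) (u : int -> C) (n : int) : C :=
  \sum_(i < (d + d).+1) a (i%:Z - d%:Z) * u (n + (i%:Z - d%:Z))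
  + real_complex R (b n) * u n.

(* vec u n = (u(nd+d-1), ..., u(nd+1), u(nd))^T ; entry i (0-based) is u(nd + d-1-i) *)
Definition vecu (d : nat) (u : int -> C) (n : int) : 'cV[C]_d :=
  \col_(i < d) u (n * d%:Z + (d%:Z - 1 - i%:Z)).

Definition Cmx (d : nat) (a : int -> C) : 'M[C]_d :=
  \matrix_(i < d, j < d) (if (i <= j)%N then a (d%:Z - j%:Z + i%:Z) else 0).

Definition adjmx (m n : nat) (A : 'M[C]_(m, n)) : 'M[C]_(n, m) :=
  (map_mx Num.conj A)^T.

Definition Smx (d : nat) (a : int -> C) : 'M[C]_(d + d) :=
  block_mx 0 (- adjmx (Cmx d a)) (Cmx d a) 0.

Definition Uvec (d : nat) (u : int -> C) : 'cV[C]_(d + d) :=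
  col_mx (vecu d u 1) (vecu d u 0).

End Defs.

(* The symplectic form U^* S V is the discrete Wronskian W(m) of u and v at
   m = d: the sum of the couplings of L across the cut between m - 1 and m.
   Since the a_k are hermitian and b is real, Green's identity reads
   W(m+1) - W(m) = conj(u m) (L v)(m) - conj((L u)(m)) v(m), so for two
   E-eigenvectors W(m+n) - W(m) = (E - conj E) * sum conj(u) v over [m, m+n).
   |W(m)| is controlled by the l^2 mass of u and v on a window of width 2d
   around m, hence the sum of |W| over K disjoint windows is bounded
   independently of K.  If E is real, W is constant and therefore 0.  If E is
   not real, taking v = u bounds |u(n)|^2 by |W| at two far-apart points, and
   the same argument gives u = 0. *)

From HB Require Import structures.
From mathcomp Require Import all_boot all_order all_algebra.
From mathcomp Require Import reals complex.
From mathcomp Require Import ring zify.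
Import Order.TTheory GRing.Theory Num.Theory.
Local Open Scope ring_scope.

Lemma natmul_bounded_eq0 {R : archiRealFieldType} {x B : R} :
  0 <= x -> (forall K : nat, x *+ K <= B) -> x = 0.
Proof.
move=> x_ge0 xK_le; apply/eqP; rewrite eq_le x_ge0 andbT leNgt; apply/negP => x_gt0.
have B_ge0 : 0 <= B by have := xK_le 0%N; rewrite mulr0n.
have := archi_boundP (divr_ge0 B_ge0 (ltW x_gt0)).
by rewrite ltr_pdivrMr // mulr_natl ltNge xK_le.
Qed.

Lemma natmul_bounded_eq0C {R : realType} {x B : R[i]} :
  0 <= x -> (forall K : nat, x *+ K <= B) -> x = 0.
Proof.
move=> x_ge0 xK_le.
have B_ge0 : 0 <= B by have := xK_le 0%N; rewrite mulr0n.
move: x_ge0 B_ge0; rewrite !lecE /= => /andP[/eqP x_real Rex_ge0] /andP[/eqP B_real _].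
have x_eq : x = real_complex R (complex.Re x) by rewrite [LHS]complexE x_real mulr0 addr0.
have B_eq : B = real_complex R (complex.Re B) by rewrite [LHS]complexE B_real mulr0 addr0.
rewrite x_eq; congr (real_complex R _); apply: (natmul_bounded_eq0 (B := complex.Re B) Rex_ge0).
by move=> K; rewrite -lecR rmorphMn -B_eq; have := xK_le K; rewrite {1}x_eq.
Qed.

Section NumDomainFacts.
Local Set Implicit Arguments.
Local Unset Strict Implicit.
Variable R : numDomainType.

Lemma ler_sum_term (I : finType) (F : I -> R) (i0 : I) :
  (forall i, 0 <= F i) -> F i0 <= \sum_i F i.
Proof. by move=> F_ge0; rewrite (bigD1 i0) //= lerDl sumr_ge0. Qed.

Lemma normM_le_sqr (x y : R) : `|x| * `|y| <= `|x| ^+ 2 + `|y| ^+ 2.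
Proof.
wlog le_xy : x y / `|x| <= `|y|.
  move=> H; have [/H //|/ltW /H] := real_leP (normr_real x) (normr_real y).
  by rewrite mulrC addrC.
apply: le_trans (ler_wpM2r (normr_ge0 _) le_xy) _.
by rewrite -expr2 lerDr exprn_ge0.
Qed.

Lemma window_le_sym_bound (phi : int -> R) M :
  (forall n, 0 <= phi n) ->
  (forall N : nat, \sum_(i < (N + N).+1) phi (i%:Z - N%:Z) <= M) ->
  forall s (L : nat), \sum_(n < L) phi (s + n%:Z) <= M.
Proof.
move=> phi_ge0 sym_le s L.
set N := (absz s + L)%N; set t := absz (s + N%:Z).
apply: le_trans (sym_le N).
rewrite -(big_mkord xpredT (fun i => phi (i%:Z - N%:Z))).
rewrite (@big_cat_nat _ _ _ t) //=; last by rewrite /t /N; lia.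
rewrite (@big_cat_nat _ _ _ (t + L) t) ?leq_addr //=; last by rewrite /t /N; lia.
have shift : \sum_(t <= i < t + L) phi (i%:Z - N%:Z) = \sum_(n < L) phi (s + n%:Z).
  rewrite -{1}[t]add0n big_addn addKn big_mkord; apply: eq_bigr => i _.
  by congr phi; rewrite /t /N; lia.
by rewrite addrCA shift -[X in X <= _]addr0 lerD // addr_ge0 // sumr_ge0.
Qed.

End NumDomainFacts.

Section Wronskian.
Local Set Implicit Arguments.
Local Unset Strict Implicit.
Variable R : realType.
Local Notation C := R[i].

Definition sqr_window_bound (w : int -> C) (M : C) :=
  forall s (L : nat), \sum_(n < L) `|w (s + n%:Z)| ^+ 2 <= M.

Lemma in_l2_sqr_window_bound (w : int -> C) : in_l2 w -> exists M, sqr_window_bound w M.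
Proof.
case=> M sym_le; exists (real_complex R M) => s L.
have Re2_Im2_ge0 n : 0 <= complex.Re (w n) ^+ 2 + complex.Im (w n) ^+ 2.
  by rewrite addr_ge0 ?sqr_ge0.
have := window_le_sym_bound Re2_Im2_ge0 sym_le s L.
rewrite -lecR rmorph_sum; apply: le_trans.
by rewrite le_eqVlt; apply/orP; left; apply/eqP/eq_bigr => n _; exact/esym/add_Re2_Im2.
Qed.

Variable d : nat.

(* the sum of f p k over 1 <= k <= d and m - k <= p < m, i.e. over the
   couplings (p, p + k) of a band operator that straddle the cut between
   m - 1 and m *)
Definition straddle_sum (f : int -> int -> C) (m : int) : C :=
  \sum_(k < d) \sum_(i < k.+1) f (m - 1 - i%:Z) k.+1%:Z.

Lemma straddle_sumS f m : straddle_sum f (m + 1) - straddle_sum f m =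
  \sum_(k < d) f m k.+1%:Z - \sum_(k < d) f (m - k.+1%:Z) k.+1%:Z.
Proof.
rewrite /straddle_sum -!sumrB; apply: eq_bigr => k _.
rewrite big_ord_recl [in X in _ - X]big_ord_recr /=.
have -> : m + 1 - 1 - 0%:Z = m by lia.
have -> : m - 1 - k%:Z = m - k.+1%:Z by lia.
have -> : \sum_(i < k) f (m + 1 - 1 - (bump 0 i)%:Z) k.+1%:Z = \sum_(i < k) f (m - 1 - i%:Z) k.+1%:Z.
  by apply: eq_bigr => i _; congr f; rewrite /bump; lia.
ring.
Qed.

Lemma sum_upper_row_rev (F : int -> C) (i : nat) : (i < d)%N ->
  \sum_(j < d) (if (i <= j)%N then F (d%:Z - j%:Z + i%:Z) else 0) =
  \sum_(j < d) (if (i <= j)%N then F j.+1%:Z else 0).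
Proof.
move=> lt_id.
rewrite -(big_mkord xpredT (fun j => if (i <= j)%N then F (d%:Z - j%:Z + i%:Z) else 0)).
rewrite -(big_mkord xpredT (fun j => if (i <= j)%N then F j.+1%:Z else 0)).
rewrite !(@big_cat_nat _ _ _ i 0 d) ?(ltnW lt_id) //=.
congr (_ + _); first by apply: eq_big_nat => j /andP[_ lt_ji]; rewrite leqNgt lt_ji.
rewrite big_nat_rev /=; apply: eq_big_nat => j /andP[le_ij lt_jd].
have le_i_rev : (i <= i + d - j.+1)%N by rewrite -addnBA // leq_addr.
by rewrite le_ij le_i_rev; congr F; lia.
Qed.

Lemma sum_upper_triangle (phi : nat -> int -> C) :
  \sum_(i < d) \sum_(j < d) (if (i <= j)%N then phi i (d%:Z - j%:Z + i%:Z) else 0) =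
  \sum_(k < d) \sum_(i < k.+1) phi i k.+1%:Z.
Proof.
under eq_bigr => i _ do rewrite (sum_upper_row_rev (phi i) (ltn_ord i)).
rewrite exchange_big /=; apply: eq_bigr => k _.
rewrite (big_ord_widen _ (fun i => phi i k.+1%:Z) (ltn_ord k)) [RHS]big_mkcond /=.
by apply: eq_bigr => i _; rewrite ltnS.
Qed.

Variable a : int -> C.

Definition coupling (u v : int -> C) (p k : int) : C := (u p)^* * a k * v (p + k).

Definition wronskian (u v : int -> C) (m : int) : C :=
  straddle_sum (coupling u v) m - straddle_sum (fun p k => (coupling v u p k)^*) m.

Lemma symplectic_form_wronskian u v :
  adjmx (Uvec d u) *m Smx d a *m Uvec d v = (wronskian u v d%:Z)%:M.
Proof.
rewrite /Uvec /Smx /adjmx map_col_mx tr_col_mx mul_row_block mul_row_col.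
rewrite !mulmx0 add0r addr0; apply/matrixP => i0 j0; rewrite !ord1 !mxE eqxx mulr1n.
congr (_ + _).
- rewrite /straddle_sum -(sum_upper_triangle (fun i k => coupling u v (d%:Z - 1 - i%:Z) k)).
  under eq_bigr => j _ do rewrite mxE mulr_suml.
  rewrite exchange_big /=; apply: eq_bigr => i _; apply: eq_bigr => j _.
  rewrite !mxE /coupling; case: ifP => _; last by rewrite mulr0 mul0r.
  by rewrite mul0r add0r mul1r; congr (_ * _ * v _); ring.
- rewrite /straddle_sum -(sum_upper_triangle (fun i k => (coupling v u (d%:Z - 1 - i%:Z) k)^*)).
  rewrite -sumrN; apply: eq_bigr => j _; rewrite mxE mulr_suml -sumrN.
  apply: eq_bigr => i _; rewrite !mxE /coupling !rmorphM /= conjCK.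
  case: ifP => _; last by rewrite rmorph0; ring.
  have -> : d%:Z - 1 - j%:Z + (d%:Z - i%:Z + j%:Z) = 1 * d%:Z + (d%:Z - 1 - i%:Z) by ring.
  by rewrite mul0r add0r; ring.
Qed.

Lemma wronskian_eq0l u v m : (forall n, u n = 0) -> wronskian u v m = 0.
Proof.
move=> u0; have straddle_sum0 f : (forall p k, f p k = 0) -> straddle_sum f m = 0.
  by move=> f0; rewrite /straddle_sum big1 // => k _; rewrite big1.
by rewrite /wronskian !straddle_sum0 ?subrr // => p k; rewrite /coupling u0 ?(rmorph0, mul0r, mulr0).
Qed.

Definition window_energy (w : int -> C) (m : int) : C :=
  \sum_(j < d + d) `|w (m - d%:Z + j%:Z)| ^+ 2.

Lemma window_energy_ge0 w m : 0 <= window_energy w m.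
Proof. by apply: sumr_ge0 => j _; rewrite exprn_ge0. Qed.

Lemma sqr_norm_le_window_energy w m p :
  m - d%:Z <= p -> p < m + d%:Z -> `|w p| ^+ 2 <= window_energy w m.
Proof.
move=> le_p lt_p; have lt_j : (absz (p - (m - d%:Z))%R < d + d)%N by lia.
have -> : p = m - d%:Z + (Ordinal lt_j : nat)%:Z by rewrite /=; lia.
by apply: (@ler_sum_term _ _ (fun j : 'I_(d + d) => `|w (m - d%:Z + j%:Z)| ^+ 2)) => j; rewrite exprn_ge0.
Qed.

Definition coef_norm1 : C := \sum_(k < d) `|a k.+1%:Z|.

Lemma straddle_sum_norm_le f m B : 0 <= B ->
  (forall (k : 'I_d) (i : 'I_k.+1), `|f (m - 1 - i%:Z) k.+1%:Z| <= `|a k.+1%:Z| * B) ->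
  `|straddle_sum f m| <= (coef_norm1 * B) *+ d.
Proof.
move=> B_ge0 f_le; rewrite /straddle_sum /coef_norm1 mulr_suml -sumrMnl.
apply: le_trans (ler_norm_sum _ _ _) _; apply: ler_sum => k _.
apply: le_trans (ler_norm_sum _ _ _) _; apply: le_trans (ler_sum _ (fun i _ => f_le k i)) _.
by rewrite sumr_const card_ord; apply: ler_wpMn2l; rewrite ?mulr_ge0.
Qed.

Lemma wronskian_norm_le u v m :
  `|wronskian u v m| <= (coef_norm1 * (window_energy u m + window_energy v m)) *+ (d + d).
Proof.
have energy_ge0 : 0 <= window_energy u m + window_energy v m.
  by rewrite addr_ge0 ?window_energy_ge0.
have in_window (k : 'I_d) (i : 'I_k.+1) w w' :
    `|w (m - 1 - i%:Z)| * `|w' (m - 1 - i%:Z + k.+1%:Z)| <=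
    window_energy w m + window_energy w' m.
  apply: le_trans (normM_le_sqr _ _) _.
  by apply: lerD; apply: sqr_norm_le_window_energy; have := ltn_ord k; have := ltn_ord i; lia.
rewrite /wronskian mulrnDr; apply: le_trans (ler_normB _ _) _.
apply: lerD; apply: straddle_sum_norm_le => // k i; rewrite /coupling.
- by rewrite !normrM norm_conjC mulrAC mulrC ler_wpM2l ?in_window.
- by rewrite norm_conjC !normrM norm_conjC mulrAC mulrC ler_wpM2l // [window_energy u m + _]addrC in_window.
Qed.

Lemma window_energy_progression_le w M : sqr_window_bound w M ->
  forall s K, \sum_(j < K) window_energy w (s + ((d + d) * j)%:Z) <= M.
Proof.
move=> w_le s K.
suff -> : \sum_(j < K) window_energy w (s + ((d + d) * j)%:Z) =
          \sum_(n < (d + d) * K) `|w (s - d%:Z + n%:Z)| ^+ 2 by apply: w_le.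
elim: K => [|K IHK]; first by rewrite big_ord0 muln0 big_ord0.
rewrite big_ord_recr /= IHK mulnSr big_split_ord /=; congr (_ + _).
by apply: eq_bigr => j _; rewrite PoszD; congr (`|w _| ^+ 2); ring.
Qed.

Lemma coef_norm1_ge0 : 0 <= coef_norm1.
Proof. exact: sumr_ge0. Qed.

Lemma sum_norm_wronskian_le u v Mu Mv :
  sqr_window_bound u Mu -> sqr_window_bound v Mv ->
  forall s K, \sum_(j < K) `|wronskian u v (s + ((d + d) * j)%:Z)|
                <= (coef_norm1 * (Mu + Mv)) *+ (d + d).
Proof.
move=> u_le v_le s K.
apply: le_trans (ler_sum _ (fun j _ => wronskian_norm_le u v _)) _.
rewrite sumrMnl -mulr_sumr big_split /= lerMn2r ler_wpM2l ?coef_norm1_ge0 ?orbT //.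
by apply: lerD; apply: window_energy_progression_le.
Qed.

Lemma sum_norm_wronskian_rev_le u v Mu Mv :
  sqr_window_bound u Mu -> sqr_window_bound v Mv ->
  forall s K, \sum_(j < K) `|wronskian u v (s - ((d + d) * j)%:Z)|
                <= (coef_norm1 * (Mu + Mv)) *+ (d + d).
Proof.
move=> u_le v_le s [|K].
  by have := sum_norm_wronskian_le u_le v_le s 0; rewrite !big_ord0.
apply: le_trans (sum_norm_wronskian_le u_le v_le (s - ((d + d) * K)%:Z) K.+1).
rewrite (reindex_inj rev_ord_inj) /= le_eqVlt; apply/orP; left; apply/eqP.
apply: eq_bigr => j _; congr (`|wronskian u v _|).
have le_jK : (j <= K)%N by have := ltn_ord j.
by rewrite subSS mulnBr -subzn ?leq_mul2l ?le_jK ?orbT //; ring.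
Qed.

Lemma Lop_split b w m : Lop d a b w m =
  \sum_(k < d) a (- k.+1%:Z) * w (m - k.+1%:Z) + a 0 * w m
  + \sum_(k < d) a k.+1%:Z * w (m + k.+1%:Z) + real_complex R (b m) * w m.
Proof.
rewrite /Lop; congr (_ + _).
rewrite -addnS big_split_ord /= big_ord_recl /= addrA; congr (_ + _ + _).
- rewrite (reindex_inj rev_ord_inj) /=; apply: eq_bigr => i _.
  by have := ltn_ord i; rewrite subnS => lt_id; congr (a _ * w _); lia.
- by rewrite addn0 subrr addr0.
- by apply: eq_bigr => i _; rewrite /bump add1n; congr (a _ * w _); lia.
Qed.

Hypothesis a_herm : forall k : int, - d%:Z <= k <= d%:Z -> a (- k) = (a k)^*.

Lemma a_oppS (k : 'I_d) : a (- k.+1%:Z) = (a k.+1%:Z)^*.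
Proof. by apply: a_herm; have := ltn_ord k; lia. Qed.

Lemma a0_conj : (a 0)^* = a 0.
Proof. by rewrite -a_herm ?oppr0 // oppr_le0 andbb. Qed.

Lemma wronskian_green b u v m :
  wronskian u v (m + 1) - wronskian u v m = (u m)^* * Lop d a b v m - (Lop d a b u m)^* * v m.
Proof.
set fwd := fun w => \sum_(k < d) a k.+1%:Z * w (m + k.+1%:Z).
set bwd := fun w => \sum_(k < d) a (- k.+1%:Z) * w (m - k.+1%:Z).
have sum_fwd_uv : \sum_(k < d) coupling u v m k.+1%:Z = (u m)^* * fwd v.
  by rewrite mulr_sumr; apply: eq_bigr => k _; rewrite mulrA.
have sum_bwd_uv : \sum_(k < d) coupling u v (m - k.+1%:Z) k.+1%:Z = (bwd u)^* * v m.
  rewrite rmorph_sum mulr_suml; apply: eq_bigr => k _.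
  by rewrite /coupling rmorphM /= a_oppS conjCK subrK [a _ * _]mulrC.
have sum_fwd_vu : \sum_(k < d) (coupling v u m k.+1%:Z)^* = (fwd u)^* * v m.
  rewrite rmorph_sum mulr_suml; apply: eq_bigr => k _.
  by rewrite /coupling !rmorphM /= conjCK -mulrA mulrC.
have sum_bwd_vu : \sum_(k < d) (coupling v u (m - k.+1%:Z) k.+1%:Z)^* = (u m)^* * bwd v.
  rewrite mulr_sumr; apply: eq_bigr => k _.
  by rewrite /coupling !rmorphM /= conjCK subrK a_oppS; ring.
have regroup (x y z t : C) : (x - y) - (z - t) = (x - z) - (y - t) by ring.
rewrite /wronskian regroup.
rewrite !straddle_sumS sum_fwd_uv sum_bwd_uv sum_fwd_vu sum_bwd_vu !Lop_split.
rewrite -/(fwd u) -/(fwd v) -/(bwd u) -/(bwd v).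
have b_real : (real_complex R (b m))^* = real_complex R (b m) by exact: conjc_real.
rewrite !rmorphD !rmorphM /= a0_conj b_real; ring.
Qed.

Variables (b : int -> R) (E : C).

Lemma wronskian_eigen_telescope u v :
  (forall n, Lop d a b u n = E * u n) -> (forall n, Lop d a b v n = E * v n) ->
  forall m (n : nat), wronskian u v (m + n%:Z) - wronskian u v m =
    (E - E^*) * \sum_(i < n) (u (m + i%:Z))^* * v (m + i%:Z).
Proof.
move=> Lu Lv m; elim=> [|n IHn]; first by rewrite big_ord0 addr0 subrr mulr0.
have -> : m + n.+1%:Z = m + n%:Z + 1 by lia.
have step := wronskian_green b u v (m + n%:Z); rewrite Lu Lv rmorphM /= in step.
rewrite big_ord_recr /= mulrDr -IHn -(subrK (wronskian u v (m + n%:Z)) (wronskian u v _)) step.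
ring.
Qed.

Lemma sqr_norm_le_wronskian_ends u : (forall n, Lop d a b u n = E * u n) ->
  forall m (i n : nat), (i < n)%N ->
  `|E - E^*| * `|u (m + i%:Z)| ^+ 2 <= `|wronskian u u (m + n%:Z)| + `|wronskian u u m|.
Proof.
move=> Lu m i n lt_in; apply: le_trans (ler_normB _ _).
rewrite (wronskian_eigen_telescope Lu Lu) normrM ler_wpM2l //.
have -> : \sum_(j < n) (u (m + j%:Z))^* * u (m + j%:Z) = \sum_(j < n) `|u (m + j%:Z)| ^+ 2.
  by apply: eq_bigr => j _; rewrite normCK mulrC.
have term_ge0 (j : 'I_n) : 0 <= `|u (m + j%:Z)| ^+ 2 by rewrite exprn_ge0.
rewrite ger0_norm ?sumr_ge0 //.
exact: (@ler_sum_term _ _ (fun j : 'I_n => `|u (m + j%:Z)| ^+ 2) (Ordinal lt_in)).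
Qed.

Lemma wronskian_eq0_real u v : E^* = E -> in_l2 u -> in_l2 v ->
  (forall n, Lop d a b u n = E * u n) -> (forall n, Lop d a b v n = E * v n) ->
  forall m, wronskian u v m = 0.
Proof.
move=> E_real /in_l2_sqr_window_bound[Mu u_le] /in_l2_sqr_window_bound[Mv v_le] Lu Lv m.
have W_const (n : nat) : wronskian u v (m + n%:Z) = wronskian u v m.
  by apply/eqP; rewrite -subr_eq0 (wronskian_eigen_telescope Lu Lv) E_real subrr mul0r.
apply/normr0_eq0/(natmul_bounded_eq0C (normr_ge0 _)) => K.
apply: le_trans (sum_norm_wronskian_le u_le v_le m K).
by rewrite (eq_bigr (fun _ => `|wronskian u v m|)) ?sumr_const ?card_ord // => j _; rewrite W_const.
Qed.

Lemma eigenvector_eq0_nonreal u : E^* != E -> in_l2 u ->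
  (forall n, Lop d a b u n = E * u n) -> forall n, u n = 0.
Proof.
move=> E_nonreal /in_l2_sqr_window_bound[M u_le] Lu n0; apply/eqP.
suff : `|E - E^*| * `|u n0| ^+ 2 = 0.
  by move/eqP; rewrite mulf_eq0 normr_eq0 subr_eq0 eq_sym (negbTE E_nonreal) expf_eq0 normr_eq0.
apply: (natmul_bounded_eq0C (B := ((coef_norm1 * (M + M)) *+ (d + d)) *+ 2)).
  by rewrite mulr_ge0 ?exprn_ge0.
move=> K.
have across (j : nat) : `|E - E^*| * `|u n0| ^+ 2 <=
    `|wronskian u u (n0 + 1 + ((d + d) * j)%:Z)| + `|wronskian u u (n0 - ((d + d) * j)%:Z)|.
  have lt_jn : ((d + d) * j < ((d + d) * j + (d + d) * j).+1)%N by rewrite ltnS leq_addr.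
  have := sqr_norm_le_wronskian_ends Lu (n0 - ((d + d) * j)%:Z) lt_jn.
  by rewrite subrK; congr (_ <= `|wronskian u u _| + _); lia.
have -> : (`|E - E^*| * `|u n0| ^+ 2) *+ K = \sum_(j < K) `|E - E^*| * `|u n0| ^+ 2.
  by rewrite sumr_const card_ord.
apply: le_trans (ler_sum _ (fun (j : 'I_K) _ => across j)) _.
rewrite big_split mulr2n /=; apply: lerD.
  exact: (sum_norm_wronskian_le u_le u_le).
exact: (sum_norm_wronskian_rev_le u_le u_le).
Qed.

End Wronskian.

Theorem lemma5p1 (R : realType) (d : nat) (a : int -> R[i]) (b : int -> R)
    (u v : int -> R[i]) (E : R[i]) :
  (0 < d)%N ->
  (forall k : int, -(d%:Z) <= k <= d%:Z -> a (- k) = Num.conj (a k)) ->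
  a d%:Z != 0 ->
  bounded_seq b ->
  in_l2 u -> in_l2 v ->
  (forall n, Lop d a b u n = E * u n) ->
  (forall n, Lop d a b v n = E * v n) ->
  adjmx (Uvec d u) *m Smx d a *m Uvec d v = 0.
Proof.
move=> _ a_herm _ _ u_l2 v_l2 Lu Lv.
rewrite symplectic_form_wronskian.
suff -> : wronskian d a u v d%:Z = 0 by apply/matrixP => i j; rewrite !mxE mul0rn.
have [E_real | E_nonreal] := eqVneq E^* E.
  exact: (wronskian_eq0_real a_herm E_real u_l2 v_l2 Lu Lv).
apply: wronskian_eq0l; exact: (eigenvector_eq0_nonreal a_herm E_nonreal u_l2 Lu).
Qed.
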